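(* For every integer $s\ge 3$ there is a positive constant $c$ depending only on $s$ such that for all sufficiently large $n$, $$ f_{s,s+1}^{(2)}(n) \ge c\left(\frac{n\log n}{\log\log n}\right)^{1/2}. $$ That is, every $K_{s+1}$-free graph on $n$ vertices contains a set of at least $c\left(\frac{n\log n}{\log\log n}\right)^{1/2}$ vertices inducing no $K_s$.
   Context: For integers $2\le s<t$ and $n\ge 0$, $f_{s,t}^{(2)}(n)$ is the minimum, over all graphs $G$ on $n$ vertices containing no complete graph $K_t$, of the maximum size of a vertex subset $W\subseteq V(G)$ such that the induced subgraph $G[W]$ contains no $K_s$. All logarithms are natural logarithms. *)

From mathcomp Require Import all_boot.
From Stdlib Require Import Reals.
Set Implicit Arguments. Unset Strict Implicit. Unset Printing Implicit Defensive.

Definition simple_graph (T : finType) (e : rel T) : Prop :=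
  (forall x y, e x y = e y x) /\ (forall x, e x x = false).

Definition is_clique (T : finType) (e : rel T) (K : {set T}) : Prop :=
  forall x y, x \in K -> y \in K -> x != y -> e x y.

Definition has_Kt (T : finType) (e : rel T) (t : nat) : Prop :=
  exists K : {set T}, #|K| = t /\ is_clique e K.

Definition induced_has_Kt (T : finType) (e : rel T) (W : {set T}) (s : nat) : Prop :=
  exists K : {set T}, K \subset W /\ #|K| = s /\ is_clique e K.

From mathcomp Require Import all_boot zify.
From Stdlib Require Import Reals ZArith Lra Psatz Classical.
From mathcomp Require Import ssrnat. (* Reals rebinds [_ ^ _] in nat_scope to Nat.pow. *)

Set Implicit Arguments. Unset Strict Implicit. Unset Printing Implicit Defensive.

(* If some vertex has degree at least d = sqrt (n L) with L = log n / log log n,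
   its neighbourhood is K_s-free and large enough.  Otherwise all degrees are
   below D = ceil d and we follow Shearer: for every vertex v, the average over
   the independent sets I of D [v \in I] + |N(v) :&: I| is at least
   lam ~ L / (20 s).  Fixing I outside the closed neighbourhood of v, this
   reduces to the independent subsets of a K_s-free set of neighbours of v, whose
   small independent sets are few by the Erdos--Szekeres bound.  Summing over v
   gives lam n <= 2 D alpha, hence alpha >= c sqrt (n L). *)

Lemma leq_pow2r m n k : m <= n -> m ^ k <= n ^ k.
Proof. by move=> mn; elim: k => // k IHk; rewrite !expnS leq_mul. Qed.

Section Graph.

Variables (T : finType) (e : rel T).
Hypotheses (e_sym : forall x y, e x y = e y x) (e_irr : forall x, e x x = false).

Definition independent (S : {set T}) : bool := [forall x in S, forall y in S, ~~ e x y].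

Lemma independentP (S : {set T}) :
  reflect (forall x y, x \in S -> y \in S -> ~~ e x y) (independent S).
Proof.
apply: (iffP forallP) => [H x y xS yS | H x].
  by have /implyP/(_ xS)/forallP/(_ y)/implyP/(_ yS) := H x.
by apply/implyP => xS; apply/forallP => y; apply/implyP => yS; apply: H.
Qed.

Lemma independent0 : independent set0.
Proof. by apply/independentP => x y; rewrite inE. Qed.

Lemma independent1 v : independent [set v].
Proof. by apply/independentP => x y; rewrite !inE => /eqP-> /eqP->; rewrite e_irr. Qed.

Lemma independentS (A B : {set T}) : A \subset B -> independent B -> independent A.
Proof.
move=> sAB /independentP iB; apply/independentP => x y xA yA.
by apply: iB; apply: (subsetP sAB).
Qed.

Lemma independentU (A B : {set T}) : independent A -> independent B ->
  (forall x y, x \in A -> y \in B -> ~~ e x y) -> independent (A :|: B).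
Proof.
move=> /independentP iA /independentP iB AB; apply/independentP => x y.
case/setUP=> [xA|xB] /setUP[yA|yB]; [exact: iA | exact: AB | | exact: iB].
by rewrite e_sym; apply: AB.
Qed.

Lemma independent_no_clique s (I : {set T}) :
  1 < s -> independent I -> ~ induced_has_Kt e I s.
Proof.
move=> s_gt1 /independentP iI [K [sKI [cardK clK]]].
have /card_gt1P[x [y [xK yK xy]]] : 1 < #|K| by rewrite cardK.
by have := iI x y (subsetP sKI x xK) (subsetP sKI y yK); rewrite clK.
Qed.

Definition nbhd v : {set T} := [set u | e v u].

Lemma induced_has_KtS s (A B : {set T}) :
  A \subset B -> ~ induced_has_Kt e B s -> ~ induced_has_Kt e A s.
Proof.
by move=> sAB noKB [K [sKA KA]]; apply: noKB; exists K; rewrite (subset_trans sKA).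
Qed.

Lemma has_Kt_induced_setT s : ~ has_Kt e s -> ~ induced_has_Kt e [set: T] s.
Proof. by move=> noK [K [_ KK]]; apply: noK; exists K. Qed.

Lemma induced_has_Kt_nbhd s (U : {set T}) v : v \in U ->
  ~ induced_has_Kt e U s.+1 -> ~ induced_has_Kt e (U :&: nbhd v) s.
Proof.
move=> vU noK [K [sK [cardK clK]]]; have NvK x : x \in K -> e v x.
  by move=> /(subsetP sK); rewrite !inE => /andP[].
apply: noK; exists (v |: K); split; [|split].
- by rewrite subUset sub1set vU (subset_trans sK) ?subsetIl.
- by rewrite cardsU1 cardK; case: (boolP (v \in K)) => // /NvK; rewrite e_irr.
- move=> x y /setU1P[->|xK] /setU1P[->|yK]; rewrite ?eqxx // => xy.
  + exact: NvK.
  + by rewrite e_sym; apply: NvK.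
  + exact: clK xy.
Qed.

Definition cnbhd v : {set T} := v |: nbhd v.

Lemma independentU1 v (S : {set T}) : S \subset ~: cnbhd v ->
  independent S -> independent (v |: S).
Proof.
move=> sS iS; apply: independentU (independent1 v) iS _ => x y.
by rewrite inE => /eqP-> /(subsetP sS); rewrite !inE negb_or => /andP[].
Qed.

Lemma ramsey_card_bound s (a : nat) (U : {set T}) : ~ induced_has_Kt e U s.+1 ->
  (forall S : {set T}, S \subset U -> independent S -> #|S| <= a) ->
  #|U| < a.+1 ^ s.
Proof.
elim: s a U => [|s IHs] a U noK.
  have [->|[v vU]] := set_0Vmem U; first by rewrite cards0.
  case: noK; exists [set v]; rewrite sub1set vU cards1; do 2!split=> //.
  by move=> x y; rewrite !inE => /eqP-> /eqP->; rewrite eqxx.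
elim: a U noK => [|a IHa] U noK alphaU; have [->|[v vU]] := set_0Vmem U;
  rewrite ?cards0 ?expn_gt0 //.
  by have := alphaU [set v]; rewrite sub1set cards1 => /(_ vU (independent1 v)).
set U1 := U :&: nbhd v; set U2 := U :\: cnbhd v.
have U1_lt : #|U1| < a.+2 ^ s.
  apply: IHs; first exact: induced_has_Kt_nbhd.
  by move=> S sS; apply: alphaU; rewrite (subset_trans sS) ?subsetIl.
have U2_lt : #|U2| < a.+1 ^ s.+1.
  apply: IHa; first by apply: induced_has_KtS noK; apply: subsetDl.
  move=> S sS iS; rewrite -ltnS.
  have sSC : S \subset ~: cnbhd v by rewrite (subset_trans sS) // /U2 setDE subsetIr.
  have vS : v \notin S by apply/negP => /(subsetP sSC); rewrite !inE eqxx.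
  have := cardsU1 v S; rewrite vS add1n => <-.
  rewrite alphaU ?independentU1 //.
  by rewrite subUset sub1set vU (subset_trans sS) ?subsetDl.
have U_le : #|U| <= (#|U1| + #|U2|).+1.
  rewrite -(cardsID (cnbhd v) U) -addSn leq_add2r /cnbhd setIUr.
  by rewrite (setIidPr _) ?sub1set // (leq_trans (leq_card_setU _ _)) ?cards1.
apply: (leq_ltn_trans U_le); rewrite [a.+2 ^ s.+1]expnS mulSn -addSn -addnS.
apply: leq_add => //; apply: (leq_trans U2_lt).
by rewrite expnS leq_mul2l leq_pow2r ?orbT.
Qed.

Definition indeps_in (U : {set T}) : {set {set T}} :=
  [set S : {set T} | (S \subset U) && independent S].

Lemma indeps_in_powerset (A U : {set T}) :
  A \in indeps_in U -> powerset A \subset indeps_in U.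
Proof.
rewrite inE => /andP[sAU iA]; apply/subsetP => S; rewrite !inE => sSA.
by rewrite (subset_trans sSA sAU) (independentS sSA).
Qed.

Lemma card_small_subsets (U : {set T}) j :
  #|[set S : {set T} | (S \subset U) && (#|S| <= j)]| <= #|U|.+1 ^ j.
Proof.
elim: j => [|j IH].
  rewrite expn0 -(cards1 (@set0 T)); apply/subset_leq_card/subsetP => S /=.
  by rewrite !inE leqn0 cards_eq0 => /andP[_ ->].
set A := [set S : {set T} | (S \subset U) && (#|S| <= j)] in IH *.
have sub : [set S : {set T} | (S \subset U) && (#|S| <= j.+1)] \subset
    A :|: [set p.2 |: p.1 | p in setX A U].
  apply/subsetP => S; rewrite inE => /andP[sSU cS].
  have [->|[y yS]] := set_0Vmem S; first by rewrite !inE sub0set cards0.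
  apply/setUP; right; apply/imsetP; exists (S :\ y, y); last by rewrite /= setD1K.
  rewrite !inE (subsetP sSU y yS) (subset_trans (subsetDl _ _) sSU) andbT /=.
  by move: cS; rewrite (cardsD1 y S) yS.
apply: (leq_trans (subset_leq_card sub)); apply: (leq_trans (leq_card_setU _ _)).
rewrite expnS mulSn mulnC; apply: leq_add; first exact: IH.
by apply: (leq_trans (leq_imset_card _ _)); rewrite cardsX leq_mul2r IH orbT.
Qed.

(* With q = r (2 lam - 1), a K_{r+1}-free set of independence number a has at
   least 2^a independent sets, but at most (a+1)^q of size below 2 lam. *)
Definition weight_cond r lam D : Prop :=
  forall a, 2 * a.+1 ^ (r * (2 * lam - 1)) < 2 ^ a \/
            lam * (2 * a.+1 ^ (r * (2 * lam - 1)) + 2) <= D.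

(* Either U has many independent sets, most of them of size at least 2 lam,
   or its independence number a is small and then D alone pays for them. *)
Lemma mean_indep_size_ge r lam D (U : {set T}) :
  ~ induced_has_Kt e U r.+1 -> weight_cond r lam D ->
  lam * (#|indeps_in U|).+1 <= D + \sum_(S in indeps_in U) #|S|.
Proof.
move=> noK cond.
have [A AU Amax] : {A | A \in indeps_in U &
                     forall S, S \in indeps_in U -> #|S| <= #|A|}.
  have s0 : set0 \in indeps_in U by rewrite inE sub0set independent0.
  by exists [arg max_(S > set0 in indeps_in U) #|S|]; case: arg_maxnP.
set a := #|A|; set m := #|indeps_in U|.
set Q := a.+1 ^ (r * (2 * lam - 1)).
have m_ge : 2 ^ a <= m.
  by rewrite -card_powerset; apply/subset_leq_card/indeps_in_powerset.
set big := [set S : {set T} | 2 * lam <= #|S|].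
set small := indeps_in U :\: big.
have small_le : #|small| <= Q.
  have sub : small \subset [set S : {set T} | (S \subset U) && (#|S| <= 2 * lam - 1)].
    by apply/subsetP => S; rewrite !inE -ltnNge => /andP[? /andP[-> _]]; lia.
  apply: (leq_trans (subset_leq_card sub)); apply: (leq_trans (card_small_subsets _ _)).
  rewrite /Q expnM leq_pow2r // ramsey_card_bound // => S sS iS.
  by apply: Amax; rewrite inE sS.
have sum_ge : 2 * lam * (m - #|small|) <= \sum_(S in indeps_in U) #|S|.
  rewrite (big_setID big) /= -/small.
  rewrite /m -(cardsID big (indeps_in U)) -/small addnK.
  apply: leq_trans (leq_addr _ _); rewrite mulnC -sum_nat_const.
  by apply: leq_sum => S; rewrite !inE => /andP[].
case: (ltnP (2 * #|small|) m) => small_m.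
  apply: leq_trans (leq_addl _ _); apply: leq_trans sum_ge; nia.
case: (cond a) => [|DQ]; first by rewrite -/Q ltnNge (leq_trans m_ge) //; lia.
by apply: leq_trans (leq_addr _ _); apply: leq_trans DQ; rewrite -/Q; nia.
Qed.

Definition indeps : {set {set T}} := [set I | independent I].

Definition free_nbhd v (J : {set T}) : {set T} :=
  [set u in nbhd v | [forall w in J, ~~ e u w]].

Lemma free_nbhd_sub v (J : {set T}) : free_nbhd v J \subset nbhd v.
Proof. by apply/subsetP => x; rewrite inE => /andP[]. Qed.

Lemma fibre_sub_cnbhd v (J S : {set T}) :
  S \in [set v] |: indeps_in (free_nbhd v J) -> S \subset cnbhd v.
Proof.
case/setU1P=> [->|]; first by rewrite sub1set setU11.
rewrite inE => /andP[sS _]; rewrite (subset_trans sS) //.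
exact: subset_trans (free_nbhd_sub v J) (subsetUr _ _).
Qed.

Lemma indep_fibre v (J : {set T}) : independent J -> [disjoint J & cnbhd v] ->
  [set I in indeps | I :\: cnbhd v == J] =
  [set J :|: S | S in [set v] |: indeps_in (free_nbhd v J)].
Proof.
move=> iJ dJ; have Jv w : w \in J -> w \notin cnbhd v.
  by move=> wJ; rewrite (disjointFr dJ wJ).
apply/setP => I; apply/idP/imsetP => [|[S SF ->]].
  rewrite !inE => /andP[iI /eqP IJ]; exists (I :&: cnbhd v); last first.
    by rewrite -IJ setUC setID.
  have /independentP iI' := iI.
  case: (boolP (v \in I)) => vI; apply/setU1P; [left | right].
    apply/setP => x; rewrite !inE; apply/andP/eqP => [[xI /orP[/eqP//|vx]]|->].
      by move: (iI' _ _ vI xI); rewrite vx.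
    by rewrite eqxx vI.
  rewrite !inE (independentS (subsetIl _ _) iI) andbT; apply/subsetP => x.
  rewrite !inE => /andP[xI /orP[/eqP xv|vx]]; first by rewrite -xv xI in vI.
  rewrite vx; apply/forallP => w; apply/implyP => wJ; apply: iI' => //.
  by move: wJ; rewrite -IJ inE => /andP[].
have SD : S :\: cnbhd v = set0 by apply/eqP; rewrite setD_eq0 (fibre_sub_cnbhd SF).
rewrite !inE setDUl (setDidPl dJ) SD setU0 eqxx andbT.
apply: independentU => //.
  by case/setU1P: SF => [->|]; [exact: independent1 | rewrite inE => /andP[]].
move=> x y xJ yS; rewrite e_sym; case/setU1P: SF => [SE|].
  by move: yS (Jv x xJ); rewrite SE !inE negb_or => /eqP-> /andP[].
rewrite inE => /andP[/subsetP sS _]; have := sS y yS.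
by rewrite inE => /andP[_ /forallP/(_ x)]; rewrite xJ.
Qed.

Definition shearer_weight D v (I : {set T}) : nat := D * (v \in I) + #|nbhd v :&: I|.

Lemma shearer_weightUl D v (J S : {set T}) : [disjoint J & cnbhd v] ->
  shearer_weight D v (J :|: S) = shearer_weight D v S.
Proof.
move=> dJ; have vJ : v \in J = false := disjointFl dJ (setU11 v _).
have NJ : [disjoint J & nbhd v] := disjointWr (subsetUr _ _) dJ.
by rewrite /shearer_weight in_setU vJ setIUr disjoint_setI0 ?set0U // disjoint_sym.
Qed.

Lemma shearer_vertex_bound r lam D v : ~ has_Kt e r.+2 -> weight_cond r lam D ->
  lam * #|indeps| <= \sum_(I in indeps) shearer_weight D v I.
Proof.
move=> noK cond; pose p I := I :\: cnbhd v.
rewrite -sum1_card (partition_big_imset p) (partition_big_imset p indeps) /=.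
rewrite big_distrr /=; apply: leq_sum => _ /imsetP[I0 I0ind ->].
have iJ : independent (p I0).
  by apply: independentS (subsetDl _ _) _; move: I0ind; rewrite inE.
have dJ : [disjoint p I0 & cnbhd v] by rewrite /p disjoints_subset setDE subsetIr.
set J := p I0 in iJ dJ *; set F := indeps_in (free_nbhd v J).
have reindex (f : {set T} -> nat) :
    \sum_(I in indeps | p I == J) f I = \sum_(S in [set v] |: F) f (J :|: S).
  have injJ : {in [set v] |: F &, injective (setU J)}.
    have JSC (S : {set T}) : S \subset cnbhd v -> (J :|: S) :&: cnbhd v = S.
      by move=> SC; rewrite setIUl disjoint_setI0 // set0U; apply/setIidPl.
    move=> S1 S2 /fibre_sub_cnbhd S1C /fibre_sub_cnbhd S2C /= eqS.
    by rewrite -(JSC _ S1C) eqS JSC.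
  rewrite -(big_imset _ injJ) -indep_fibre //.
  by apply: eq_big => // I; rewrite !inE.
have vF : [set v] \notin F.
  by rewrite inE negb_and sub1set !inE e_irr.
rewrite (reindex (fun=> 1)) (reindex (shearer_weight D v)) !big_setU1 //= sum1_card add1n.
have -> : \sum_(S in F) shearer_weight D v (J :|: S) = \sum_(S in F) #|S|.
  apply: eq_bigr => S; rewrite inE => /andP[sS _].
  have SN := subset_trans sS (free_nbhd_sub v J).
  have vS : v \in S = false.
    by apply/negbTE/negP => /(subsetP SN); rewrite inE e_irr.
  by rewrite shearer_weightUl // /shearer_weight vS muln0 (setIidPr SN).
have NvJ : nbhd v :&: [set v] = set0.
  by apply/setP => x; rewrite !inE; case: (x =P v) => [->|]; rewrite ?e_irr ?andbF.
rewrite shearer_weightUl // /shearer_weight set11 muln1 NvJ cards0 addn0.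
apply: mean_indep_size_ge cond; apply: induced_has_KtS (free_nbhd_sub v J) _.
by rewrite -[nbhd v]setTI; apply/induced_has_Kt_nbhd/has_Kt_induced_setT.
Qed.

Lemma card_sum_mem (A : {set T}) : #|A| = \sum_x (x \in A).
Proof. by rewrite -sum1_card big_mkcond; apply: eq_bigr => x _; case: (x \in A). Qed.

Lemma sum_shearer_weight_le D (I : {set T}) : (forall v, #|nbhd v| <= D) ->
  \sum_v shearer_weight D v I <= 2 * D * #|I|.
Proof.
move=> degD.
have deg_sum : \sum_v #|nbhd v :&: I| = \sum_(u in I) #|nbhd u|.
  transitivity (\sum_(v : T) \sum_(u in I) e v u).
    apply: eq_bigr => v _; rewrite card_sum_mem [RHS]big_mkcond /=.
    by apply: eq_bigr => u _; rewrite !inE andbC; case: (u \in I).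
  rewrite exchange_big /=; apply: eq_bigr => u _; rewrite card_sum_mem.
  by apply: eq_bigr => v _; rewrite inE e_sym.
rewrite big_split /= -big_distrr /= -card_sum_mem deg_sum mul2n -addnn mulnDl.
by rewrite leq_add2l mulnC -sum_nat_const leq_sum.
Qed.

Lemma shearer_indep_bound r lam D : ~ has_Kt e r.+2 -> weight_cond r lam D ->
  (forall v, #|nbhd v| <= D) ->
  exists I, independent I /\ lam * #|T| <= 2 * D * #|I|.
Proof.
move=> noK cond degD.
have s0 : set0 \in indeps by rewrite inE independent0.
have [Im Im_ind Im_max] : {Im | Im \in indeps &
                          forall I, I \in indeps -> #|I| <= #|Im|}.
  by exists [arg max_(I > set0 in indeps) #|I|]; case: arg_maxnP.
exists Im; split; first by move: Im_ind; rewrite inE.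
have indeps_gt0 : 0 < #|indeps| by apply/card_gt0P; exists set0.
rewrite -(leq_pmul2r indeps_gt0).
have -> : lam * #|T| * #|indeps| = \sum_(v : T) lam * #|indeps|.
  by rewrite sum_nat_const mulnAC mulnC.
apply: (@leq_trans (\sum_v \sum_(I in indeps) shearer_weight D v I)).
  by apply: leq_sum => v _; apply: shearer_vertex_bound cond.
rewrite exchange_big /= mulnC -sum_nat_const; apply: leq_sum => I I_ind.
by rewrite (leq_trans (sum_shearer_weight_le _ degD)) // leq_mul2l Im_max ?orbT.
Qed.

End Graph.

Lemma pow_succ_mul_sub_le n q : q <= n -> n.+1 ^ q * (n - q) <= n ^ q.+1.
Proof.
elim: q => [|q IHq] qn; first by rewrite mul1n subn0.
have step : n.+1 * (n - q.+1) <= n * (n - q) by nia.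
rewrite expnS mulnAC (leq_trans (leq_mul step (leqnn _))) //.
by rewrite -mulnA [n ^ q.+2]expnS leq_mul2l mulnC IHq ?orbT // ltnW.
Qed.

Lemma pow_succ_le_double n q : 0 < n -> q.*2 <= n -> n.+1 ^ q <= 2 * n ^ q.
Proof.
move=> n_gt0 qn; rewrite -(leq_pmul2r n_gt0) -mulnA -expnSr.
apply: (@leq_trans (n.+1 ^ q * (2 * (n - q)))); first by rewrite leq_mul2l; lia.
by rewrite mulnCA leq_mul2l pow_succ_mul_sub_le ?orbT //; lia.
Qed.

Lemma sq_lt_exp2 k : 0 < k -> 16 * k ^ 2 < 2 ^ (8 * k).
Proof.
move=> k_gt0; have k2 : k ^ 2 <= 2 ^ (2 * k).
  by rewrite mulnC expnM leq_pow2r // ltnW // ltn_expl.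
apply: (@leq_trans (2 ^ (2 * k + 5))); last by rewrite leq_exp2l //; lia.
have pos : 0 < 2 ^ (2 * k) by rewrite expn_gt0.
by rewrite expnD; lia.
Qed.

Lemma pow_le_exp2 q a : 16 * q.+1 ^ 2 <= a -> 4 * a.+1 ^ q <= 2 ^ a.
Proof.
move=> qa; rewrite -(subnKC qa); elim: (a - _) => [|d IHd].
  rewrite addn0; apply: (@leq_trans (4 * 2 ^ (8 * q.+1 * q))).
    by rewrite leq_mul2l mulnC expnM leq_pow2r ?orbT // mulnC sq_lt_exp2.
  by rewrite -(expnD 2 2) leq_exp2l //; nia.
rewrite addnS [2 ^ _.+1]expnS (leq_trans _ (leq_mul (leqnn 2) IHd)) //.
rewrite mulnCA leq_mul2l.
rewrite pow_succ_le_double ?orbT //; have : q <= q.+1 ^ 2 by rewrite expnS; nia.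
lia.
Qed.

Lemma weight_cond_of_pow_le r lam D : 0 < lam ->
  (10 * r.+1 * lam) ^ (10 * r.+1 * lam) <= D -> weight_cond r lam D.
Proof.
move=> lam_gt0 BD a; set q := r * (2 * lam - 1); set B := 10 * r.+1 * lam.
have [qa|aq] := leqP (16 * q.+1 ^ 2) a.
  have pos : 0 < a.+1 ^ q by rewrite expn_gt0.
  by left; have := pow_le_exp2 qa; lia.
right; apply: leq_trans BD.
have aB : a.+1 ^ q <= B ^ (2 * q).
  by rewrite expnM leq_pow2r // (leq_trans aq) // /B /q; nia.
apply: (@leq_trans (B ^ 2 * B ^ (2 * q))).
  have : lam * 4 <= B ^ 2 by rewrite /B; nia.
  have : 0 < a.+1 ^ q by rewrite expn_gt0.
  nia.
by rewrite -expnD leq_pexp2l /B /q; nia.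
Qed.

Section Reals.

Local Open Scope R_scope.

Lemma ln_le_ln x y : 0 < x -> x <= y -> ln x <= ln y.
Proof. by move=> x0 [xy|->]; [left; apply: ln_increasing | right]. Qed.

Lemma ln_le_inv x y : 0 < x -> 0 < y -> ln x <= ln y -> x <= y.
Proof.
move=> x0 y0 lnxy; apply: Rnot_lt_le => yx.
by have := ln_increasing _ _ y0 yx; lra.
Qed.

Lemma ln_sqrt x : 0 < x -> ln (sqrt x) = ln x / 2.
Proof.
move=> x0; have sx0 : 0 < sqrt x by apply: sqrt_lt_R0.
have : ln (sqrt x * sqrt x) = ln (sqrt x) + ln (sqrt x) by rewrite ln_mult.
rewrite sqrt_sqrt; lra.
Qed.

Lemma ln_le_2sqrt x : 0 < x -> ln x <= 2 * sqrt x.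
Proof.
move=> x0; have sx0 : 0 < sqrt x by apply: sqrt_lt_R0.
have := exp_ineq1_le (ln (sqrt x)); rewrite exp_ln // ln_sqrt //; lra.
Qed.

Lemma INR_expn m n : INR (m ^ n)%N = INR m ^ n.
Proof. by elim: n => [|n IHn]; rewrite ?expn0 // expnS mult_INR IHn. Qed.

Lemma nat_ceil y : 0 <= y -> exists k : nat, y <= INR k <= y + 1.
Proof.
move=> y0; have [up_gt up_le] := archimed y.
have up0 : (0 <= up y)%Z by apply: le_IZR; lra.
exists (Z.to_nat (up y)); rewrite INR_IZR_INZ Z2Nat.id //; lra.
Qed.

Lemma nat_floor y : 0 <= y -> exists k : nat, INR k <= y < INR k + 1.
Proof.
move=> y0; have [ip_le ip_gt] := base_Int_part y.
have ip0 : (0 <= Int_part y)%Z.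
  have : (-1 < Int_part y)%Z by apply: lt_IZR; lra.
  lia.
exists (Z.to_nat (Int_part y)); rewrite INR_IZR_INZ Z2Nat.id //; lra.
Qed.

Lemma ln_ln_ge1 x : 3 <= ln x -> 1 <= ln (ln x).
Proof.
move=> l3; rewrite -[1](ln_exp 1); apply: ln_le_ln; first exact: exp_pos.
by have := exp_le_3; lra.
Qed.

Definition loglog_ratio x := ln x / ln (ln x).

Lemma loglog_ratio_ge_sqrt x : 3 <= ln x -> sqrt (ln x) / 2 <= loglog_ratio x.
Proof.
move=> l3; have := ln_ln_ge1 l3.
have l0 : 0 < ln x by lra.
have := ln_le_2sqrt l0.
have := sqrt_sqrt (ln x) ltac:(lra); have := sqrt_pos (ln x).
rewrite /loglog_ratio => ? ? ? ?.
apply: (Rmult_le_reg_r (ln (ln x))) => //; field_simplify; nra.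
Qed.

Lemma pow_self_le_sqrt x (k : nat) : 0 < x -> 3 <= ln x ->
  1 <= INR k <= loglog_ratio x / 2 -> INR k ^ k <= sqrt x.
Proof.
move=> x0 l3 [k1 kL]; have ll1 := ln_ln_ge1 l3.
have lnk0 : 0 <= ln (INR k) by rewrite -ln_1; apply: ln_le_ln; lra.
have lnk : ln (INR k) <= ln (ln x).
  apply: ln_le_ln; first lra.
  apply: Rle_trans kL _; rewrite /loglog_ratio.
  have : ln x / ln (ln x) <= ln x.
    by apply: (Rmult_le_reg_r (ln (ln x))); [lra | field_simplify; nra].
  lra.
have LL : loglog_ratio x * ln (ln x) = ln x by rewrite /loglog_ratio; field; lra.
apply: ln_le_inv; [apply: pow_lt; lra | exact: sqrt_lt_R0 | ].
rewrite ln_pow ?ln_sqrt //; last lra.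
have k0 : 0 <= INR k by lra.
have := Rmult_le_compat _ _ _ _ k0 lnk0 kL lnk; lra.
Qed.

Lemma sparse_final_bound M L x d lam D i :
  0 < M -> 0 <= x -> 1 <= d -> d * d = x * L -> 0 <= i ->
  L / (4 * M) <= lam -> D <= 2 * d -> lam * x <= 2 * D * i ->
  / (16 * M) * d <= i.
Proof.
move=> M0 x0 d1 dd i0 lamL Dd lamx.
have L_le : L <= 4 * M * lam.
  have -> : L = 4 * M * (L / (4 * M)) by field; lra.
  by apply: Rmult_le_compat_l; lra.
have h1 : x * L <= 4 * M * (lam * x) by nra.
have h2 : lam * x <= 4 * d * i by nra.
have h : d * d <= 16 * M * d * i by rewrite dd; nra.
rewrite -(Rmult_1_l i) -(Rinv_l (16 * M)); last lra.
rewrite Rmult_assoc; apply: Rmult_le_compat_l; first by apply/Rlt_le/Rinv_0_lt_compat; lra.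
nra.
Qed.

Lemma sparse_indep_bound (T : finType) (e : rel T) r :
  simple_graph e -> ~ has_Kt e r.+2 ->
  exp (3 + 64 * INR (10 * r.+1) ^ 2) <= INR #|T| ->
  (forall v, INR #|nbhd e v| < sqrt (INR #|T| * loglog_ratio (INR #|T|))) ->
  exists I, independent e I /\
    / (16 * INR (10 * r.+1)) * sqrt (INR #|T| * loglog_ratio (INR #|T|)) <= INR #|I|.
Proof.
move=> [e_sym e_irr] noK x_ge deg_lt.
set M := INR (10 * r.+1) in x_ge *; set x := INR #|T| in x_ge deg_lt *.
set L := loglog_ratio x in deg_lt *; set d := sqrt (x * L) in deg_lt *.
have M1 : 1 <= M by rewrite /M -/(INR 1); apply/le_INR/leP; lia.
have x0 : 0 < x by apply: Rlt_le_trans x_ge; apply: exp_pos.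
have x1 : 1 <= x by have := exp_ineq1_le (3 + 64 * M ^ 2); nra.
have lnx : 3 + 64 * M ^ 2 <= ln x by rewrite -[_ + _]ln_exp; apply: ln_le_ln; [apply: exp_pos|].
have l3 : 3 <= ln x by nra.
have L_ge : 4 * M <= L.
  have : 8 * M <= sqrt (ln x).
    by rewrite -[8 * M]sqrt_pow2; [apply: sqrt_le_1_alt; nra | lra].
  have := loglog_ratio_ge_sqrt l3; rewrite -/L; lra.
have dd : d * d = x * L by apply: sqrt_sqrt; nra.
have d1 : 1 <= d by rewrite -sqrt_1; apply: sqrt_le_1_alt; nra.
have [D [dD Dd]] := nat_ceil (ltac:(lra) : 0 <= d).
have L2M : 2 <= L / (2 * M).
  by apply: (Rmult_le_reg_r (2 * M)); [lra | field_simplify; lra].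
have [lam [lamL Llam]] := nat_floor (ltac:(lra) : 0 <= L / (2 * M)).
have lam_gt0 : (0 < lam)%N by apply/ltP/INR_lt; rewrite /=; lra.
have cond : weight_cond r lam D.
  apply: weight_cond_of_pow_le => //; set B := (10 * r.+1 * lam)%N.
  apply/leP/INR_le; rewrite INR_expn.
  have B_le : INR B <= L / 2.
    rewrite mult_INR -/M; have -> : L / 2 = M * (L / (2 * M)) by field; lra.
    by apply: Rmult_le_compat_l; lra.
  have B_ge : 1 <= INR B by rewrite -/(INR 1); apply/le_INR/leP; nia.
  have x_d : sqrt x <= d by apply: sqrt_le_1_alt; nra.
  have := pow_self_le_sqrt x0 l3 (conj B_ge B_le); lra.
have degD v : (#|nbhd e v| <= D)%N by apply/leP/INR_le; have := deg_lt v; lra.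
have [I [iI lamI]] := shearer_indep_bound e_sym e_irr noK cond degD.
exists I; split => //.
have lam_ge : L / (4 * M) <= INR lam.
  have -> : L / (4 * M) = L / (2 * M) / 2 by field; lra.
  lra.
move/leP/le_INR: lamI; rewrite !mult_INR -/x => lamI.
apply: (sparse_final_bound (L := L) (x := x) (lam := INR lam) (D := INR D)) => //;
  by [lra | exact: pos_INR].
Qed.

End Reals.

Theorem mainTheorem3 :
  forall s : nat, 3 <= s ->
  exists c : R, (0 < c)%R /\
  exists N : nat, forall n : nat, N <= n ->
  forall e : rel 'I_n, simple_graph e -> ~ has_Kt e s.+1 ->
  exists W : {set 'I_n}, ~ induced_has_Kt e W s /\
    (c * sqrt (INR n * ln (INR n) / ln (ln (INR n))) <= INR #|W|)%R.
Proof.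
move=> [//|r] s_ge3; set M := INR (10 * r.+1).
have M1 : (1 <= M)%R by rewrite /M -/(INR 1); apply/le_INR/leP; lia.
exists (/ (16 * M))%R; split; first by apply: Rinv_0_lt_compat; lra.
have [N [N_ge _]] := nat_ceil (Rlt_le _ _ (exp_pos (3 + 64 * M ^ 2))).
exists N => n Nn e simple_e noK; have [e_sym e_irr] := simple_e.
have x_ge : (exp (3 + 64 * M ^ 2) <= INR #|'I_n|)%R.
  by rewrite card_ord; apply: Rle_trans N_ge (le_INR _ _ (leP Nn)).
have -> : (INR n * ln (INR n) / ln (ln (INR n)) = INR n * loglog_ratio (INR n))%R.
  by rewrite /loglog_ratio /Rdiv Rmult_assoc.
set d := sqrt (INR n * loglog_ratio (INR n)).
have [[v dv]|sparse] := classic (exists v, d <= INR #|nbhd e v|)%R.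
  exists (nbhd e v); split.
    rewrite -[nbhd e v]setTI; apply: (induced_has_Kt_nbhd e_sym e_irr (in_setT v)).
    exact: has_Kt_induced_setT.
  have c_le1 : (/ (16 * M) <= 1)%R by rewrite -Rinv_1; apply: Rinv_le_contravar; lra.
  apply: Rle_trans dv; rewrite -[X in (_ <= X)%R]Rmult_1_l.
  by apply: Rmult_le_compat_r => //; apply: sqrt_pos.
have deg_lt v : (INR #|nbhd e v| < d)%R by apply: Rnot_le_lt => dv; apply: sparse; exists v.
have := sparse_indep_bound simple_e noK x_ge; rewrite card_ord.
case/(_ deg_lt) => I [iI dI]; exists I; split => //.
exact: independent_no_clique (ltnW s_ge3) iI.
Qed.
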